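(* Let $X=\omega\times\omega$, and let $I$ and $J$ be the ideals on $X$ defined below. Then $\mathscr C_J$ covers $\mathscr C_I$ in the lattice of clones on $X$: we have $\mathscr C_I\subsetneq \mathscr C_J$, and there is no clone $\mathscr D$ on $X$ with $\mathscr C_I\subsetneq\mathscr D\subsetneq\mathscr C_J$. Equivalently, for every $f\in\mathscr C_J\setminus\mathscr C_I$, the clone generated by $\{f\}\cup\mathscr C_I$ equals $\mathscr C_J$.
   Context: A clone on a set $X$ is a set of finitary operations on $X$ containing all projections $\pi^n_k(x_1,\dots,x_n)=x_k$ and closed under composition; clones ordered by inclusion form a lattice. Write elements of $X=\omega\times\omega$ as $(a|b)$, with $a$ the $x$-coordinate and $b$ the $y$-coordinate. Sets of the form $\omega\times\{n\}$ are called lines. The width of $Y\subseteq X$ is $\sup\{|Y\cap(\omega\times\{n\})|:n\in\omega\}$. $I$ is the ideal of all subsets of $X$ of finite width; $J$ is the ideal of all subsets of $X$ whose intersection with every line is finite. For an ideal $K$ on $X$, $\mathscr C_K$ is the set of all finitary operations $f:X^n\to X$ ($n\ge1$) such that $f[A^n]\in K$ for all $A\in K$. *)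

From mathcomp Require Import all_boot.
From Stdlib Require Import List.
Set Implicit Arguments. Unset Strict Implicit. Unset Printing Implicit Defensive.

(* The base set X = omega x omega; (a, b) stands for (a|b):
   a is the x-coordinate, b the y-coordinate.  Line n = omega x {n}. *)
Definition X : Type := (nat * nat)%type.

Definition subset := X -> Prop.

(* A finitary operation of arity n+1 >= 1 : X^(n+1) -> X.
   The arity shift encodes the convention that arities are >= 1. *)
Definition Op : Type := { n : nat & ('I_n.+1 -> X) -> X }.

Definition arity (f : Op) : nat := (projT1 f).+1.

Definition proj_op (n : nat) (k : 'I_n.+1) : Op :=
  existT (fun m => ('I_m.+1 -> X) -> X) n (fun x => x k).

Definition comp_op (n m : nat) (f : ('I_n.+1 -> X) -> X)
    (g : 'I_n.+1 -> ('I_m.+1 -> X) -> X) : Op :=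
  existT (fun k => ('I_k.+1 -> X) -> X) m (fun x => f (fun i => g i x)).

Definition is_clone (C : Op -> Prop) : Prop :=
  (forall (n : nat) (k : 'I_n.+1), C (proj_op k)) /\
  (forall (n m : nat) (f : ('I_n.+1 -> X) -> X)
          (g : 'I_n.+1 -> ('I_m.+1 -> X) -> X),
      C (existT _ n f) ->
      (forall i, C (existT (fun k => ('I_k.+1 -> X) -> X) m (g i))) ->
      C (comp_op f g)).

Definition line_card_le (Y : subset) (n k : nat) : Prop :=
  forall l : list nat, NoDup l -> (forall a, In a l -> Y (a, n)) ->
    (length l <= k)%coq_nat.

Definition idealI (Y : subset) : Prop :=
  exists k : nat, forall n : nat, line_card_le Y n k.

Definition idealJ (Y : subset) : Prop :=
  forall n : nat, exists l : list nat, forall a, Y (a, n) -> In a l.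

Definition image_pow (f : Op) (A : subset) : subset :=
  fun y => exists x : 'I_(projT1 f).+1 -> X,
      (forall i, A (x i)) /\ projT2 f x = y.

Definition cloneOf (K : subset -> Prop) (f : Op) : Prop :=
  forall A : subset, K A -> K (image_pow f A).

(* 1. Both ideals are closed under subsets and finite unions, so the
      operations preserving them form clones ([cloneOf_is_clone]).
   2. [lift_op] preserves J but not I.
   3. Local finiteness ([local_finiteness]): if [g] maps sets of finite width
      to sets meeting lines finitely, then for every line [m] and partial tuple
      [p] there are finitely many lines [F] and values [V] such that [g x] lies
      in [V] whenever [x] extends [p], [g x] is on line [m] and the free
      coordinates of [x] avoid [F].  Otherwise a sequence of tuples with
      disjoint free lines yields a set of finite width whose image meets line
      [m] infinitely.
   4. Iterating local finiteness, [g x] is determined by at most [n.+1]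
      refinement steps, each chosen among finitely many possibilities
      ([trace_final]).  Counting the possible traces shows that every
      operation preserving I preserves J ([cloneOf_I_J]).
   5. If a clone [D] with [cloneOf idealI <= D <= cloneOf idealJ] contains
      some [f] outside [cloneOf idealI], then [f] maps a set [A0] of finite
      width onto a set [B] of infinite width, whose long lines can code the
      refinement steps.  Every [g] in [cloneOf idealJ] is then the composite
      of an operation [guarded] of [cloneOf idealI] with projections and code
      operations with values in [B], all of which lie in [D]
      ([clone_above_I]). *)

From Stdlib Require Import List Classical ClassicalEpsilon FunctionalExtensionality.
From mathcomp Require Import all_boot zify.
Set Implicit Arguments. Unset Strict Implicit. Unset Printing Implicit Defensive.

Definition bounded {T} (P : T -> Prop) (N : nat) : Prop :=
  exists s : list T, length s <= N /\ forall y, P y -> In y s.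

Definition finite {T} (P : T -> Prop) : Prop :=
  exists s : list T, forall y, P y -> In y s.

Lemma finiteP {T : Type} (P : T -> Prop) : finite P <-> exists N, bounded P N.
Proof. by split=> [[s hs]|[N [s [_ hs]]]]; [exists (length s), s | exists s]. Qed.

Lemma bounded_le {T : Type} (P : T -> Prop) N M : N <= M -> bounded P N -> bounded P M.
Proof. by move=> hNM [s [hs cover]]; exists s; split=> //; lia. Qed.

Lemma bounded_sub {T : Type} (P Q : T -> Prop) N :
  (forall y, Q y -> P y) -> bounded P N -> bounded Q N.
Proof. by move=> hQP [s [hs cover]]; exists s; split=> // y /hQP /cover. Qed.

Lemma finite_sub {T : Type} (P Q : T -> Prop) :
  (forall y, Q y -> P y) -> finite P -> finite Q.
Proof. by move=> hQP [s cover]; exists s => y /hQP /cover. Qed.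

Lemma bounded_image {T U : Type} (P : T -> Prop) (Q : U -> Prop) (f : T -> U) N :
  (forall y, Q y -> exists2 z, P z & y = f z) -> bounded P N -> bounded Q N.
Proof.
move=> hQ [s [hs cover]]; exists (List.map f s); rewrite length_map; split=> //.
by move=> y /hQ [z /cover hz ->]; exact: in_map.
Qed.

Lemma finite_image {T U : Type} (P : T -> Prop) (Q : U -> Prop) (f : T -> U) :
  (forall y, Q y -> exists2 z, P z & y = f z) -> finite P -> finite Q.
Proof. by move=> hQ /finiteP [N /(bounded_image hQ) hN]; apply/finiteP; exists N. Qed.

Lemma bounded1 {T : Type} (a : T) : bounded (fun y => y = a) 1.
Proof. by exists (a :: nil); split=> // y ->; left. Qed.

Lemma finite1 {T : Type} (a : T) : finite (fun y => y = a).
Proof. by apply/finiteP; exists 1; exact: bounded1. Qed.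

Lemma boundedU {T : Type} (P Q : T -> Prop) N M :
  bounded P N -> bounded Q M -> bounded (fun y => P y \/ Q y) (N + M).
Proof.
move=> [s [hs coverP]] [s' [hs' coverQ]]; exists (s ++ s'); rewrite length_app.
by split; [lia | move=> y [/coverP|/coverQ] hy; apply/in_app_iff; [left|right]].
Qed.

Lemma finiteU {T : Type} (P Q : T -> Prop) :
  finite P -> finite Q -> finite (fun y => P y \/ Q y).
Proof.
move=> /finiteP [N hN] /finiteP [M hM]; apply/finiteP.
by exists (N + M); exact: boundedU.
Qed.

Lemma bounded_bigU {T U : Type} (P : T -> Prop) (Q : T -> U -> Prop) N M :
  bounded P N -> (forall z, P z -> bounded (Q z) M) ->
  bounded (fun y => exists2 z, P z & Q z y) (N * M).
Proof.
move=> [s [hs coverP]] hQ.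
suff [l [hl coverQ]] : exists l : list U, length l <= length s * M /\
    forall y z, In z s -> P z -> Q z y -> In y l.
  by exists l; split=> [|y [z Pz Qzy]]; [nia | exact: coverQ y z (coverP z Pz) Pz Qzy].
elim: s {hs coverP} => [|a s [l [hl coverQ]]]; first by exists nil.
case: (classic (P a)) => [Pa|nPa].
  have [la [hla coverQa]] := hQ a Pa.
  exists (la ++ l); rewrite length_app; split=> [/=|y z [<-|hz] Pz Qzy]; first lia.
    by apply/in_app_iff; left; exact: coverQa.
  by apply/in_app_iff; right; exact: coverQ y z hz Pz Qzy.
exists l; split=> [/=|y z [<-|hz] Pz Qzy //]; first lia.
exact: coverQ y z hz Pz Qzy.
Qed.

Lemma common_bound {T : Type} (B : T -> nat -> Prop) (s : list T) :
  (forall z N M, N <= M -> B z N -> B z M) ->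
  (forall z, In z s -> exists N, B z N) -> exists N, forall z, In z s -> B z N.
Proof.
move=> mono; elim: s => [|a s IH] hs; first by exists 0.
have [Na hNa] := hs a (or_introl erefl).
have [Ns hNs] := IH (fun z hz => hs z (or_intror hz)).
exists (maxn Na Ns) => z [<-|hz]; first by apply: mono hNa; exact: leq_maxl.
by apply: mono (hNs z hz); exact: leq_maxr.
Qed.

Lemma finite_bigU {T U : Type} (P : T -> Prop) (Q : T -> U -> Prop) :
  finite P -> (forall z, P z -> finite (Q z)) ->
  finite (fun y => exists2 z, P z & Q z y).
Proof.
move=> [s coverP] hQ.
have [M hM] : exists M, forall z, In z s -> P z -> bounded (Q z) M.
  apply: common_bound => [z N M' hNM hN /hN|z _]; first exact: bounded_le.
  case: (classic (P z)) => [/hQ /finiteP [N hN]|nPz]; first by exists N.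
  by exists 0.
apply/finiteP; exists (length s * M).
by apply: bounded_bigU => [|z Pz]; [exists s | exact: hM (coverP z Pz) Pz].
Qed.

Lemma bounded_nodupP {T : Type} (P : T -> Prop) N :
  bounded P N <->
  forall l, NoDup l -> (forall a, In a l -> P a) -> (length l <= N)%coq_nat.
Proof.
split=> [[s [hs cover]] l nd hl|H].
  have := NoDup_incl_length nd (fun a hla => cover a (hl a hla)); lia.
case: (classic (exists l, [/\ NoDup l, forall a, In a l -> P a & forall a, P a -> In a l])).
  by move=> [l [nd hl cover]]; exists l; split=> //; have := H l nd hl; lia.
move=> no_cover; exfalso.
have long k : exists l, [/\ NoDup l, forall a, In a l -> P a & length l = k].
  elim: k => [|k [l [nd hl <-]]]; first by exists nil; split=> //; constructor.
  have [a Pa nla] : exists2 a, P a & ~ In a l.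
    apply: NNPP => hno; apply: no_cover; exists l; split=> // a Pa.
    by apply: NNPP => nla; apply: hno; exists a.
  by exists (a :: l); split=> //; [constructor | move=> b [<-|/hl]].
have [l [nd hl hlen]] := long N.+1.
by have := H l nd hl; lia.
Qed.

Lemma In_mem (T : eqType) (x : T) (s : seq T) : In x s <-> x \in s.
Proof.
elim: s => [|a s IH] //=; rewrite in_cons; split.
  by case=> [->|/IH ->]; rewrite ?eqxx ?orbT.
by case/orP=> [/eqP ->|/IH]; [left|right].
Qed.

Lemma bounded_mem (T : eqType) (s : seq T) : bounded (fun y => y \in s) (size s).
Proof. by exists s; split=> [|y /In_mem]; [elim: s => //= a s IH; lia|]. Qed.

Lemma finite_mem (T : eqType) (s : seq T) : finite (fun y => y \in s).
Proof. by exists s => y /In_mem. Qed.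

Lemma size_length {T : Type} (s : seq T) : size s = length s.
Proof. by elim: s => //= a s ->. Qed.

Lemma uniq_NoDup (T : eqType) (s : seq T) : uniq s <-> NoDup s.
Proof.
elim: s => [|a s IH] /=; first by split=> // _; constructor.
rewrite NoDup_cons_iff -IH In_mem; split=> [/andP [/negP nas us]|[nas us]] //.
by rewrite us andbT; apply/negP.
Qed.

Lemma bounded_coords {T : Type} (n : nat) (h : 'I_n -> T * nat) (l : nat) :
  bounded (fun a => exists i, h i = (a, l)) n.
Proof.
have := bounded_image (f := fun i => (h i).1) _ (bounded_mem (enum 'I_n)).
rewrite size_enum_ord; apply=> a [i hi].
by exists i; rewrite ?mem_enum ?hi.
Qed.

Definition on_line (A : X -> Prop) (n : nat) : nat -> Prop := fun a => A (a, n).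

Lemma idealI_bounded (A : X -> Prop) :
  idealI A <-> exists t, forall n, bounded (on_line A n) t.
Proof.
split=> [[t Ht]|[t Ht]]; exists t => n; first by apply/bounded_nodupP; exact: Ht.
exact: (bounded_nodupP _ _).1 (Ht n).
Qed.

Lemma idealI_J (A : X -> Prop) : idealI A -> idealJ A.
Proof. by move=> /idealI_bounded [t Ht] n; apply/(finiteP (on_line A n)); exists t. Qed.

Definition is_ideal (K : (X -> Prop) -> Prop) : Prop :=
  (forall A B : X -> Prop, K A -> (forall y, B y -> A y) -> K B) /\
  (forall (k : nat) (A : 'I_k -> X -> Prop),
     (forall i, K (A i)) -> K (fun y => exists i, A i y)).

Lemma is_ideal_I : is_ideal idealI.
Proof.
split=> [A B /idealI_bounded [t Ht] hBA|k A HA].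
  by apply/idealI_bounded; exists t => n; apply: bounded_sub (Ht n) => a /hBA.
have [t Ht] : exists t, forall i, In i (enum 'I_k) -> forall n, bounded (on_line (A i) n) t.
  apply: common_bound => [i N M hNM hN n|i _]; first exact: bounded_le (hN n).
  by have /idealI_bounded := HA i.
apply/idealI_bounded; exists (size (enum 'I_k) * t) => n.
have := bounded_bigU (bounded_mem (enum 'I_k)) (fun i hi => Ht i (proj2 (In_mem _ _) hi) n).
by apply: bounded_sub => a [i Aia]; exists i; rewrite ?mem_enum.
Qed.

Lemma is_ideal_J : is_ideal idealJ.
Proof.
split=> [A B HA hBA n|k A HA n]; first by apply: finite_sub (HA n) => a /hBA.
apply: finite_sub (finite_bigU (finite_mem (enum 'I_k)) (fun i _ => HA i n)).
by move=> a [i Aia]; exists i; rewrite ?mem_enum.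
Qed.

Lemma cloneOf_is_clone (K : (X -> Prop) -> Prop) : is_ideal K -> is_clone (cloneOf K).
Proof.
move=> [Ksub KU]; split=> [n k A HA|n m f g Hf Hg A HA].
  by apply: Ksub HA _ => y [x [Ax <-]]; exact: Ax.
pose U y := exists i : 'I_n.+1, image_pow (existT _ m (g i)) A y.
apply: Ksub (Hf U (KU _ _ (fun i => Hg i A HA))) _ => y [x [Ax <-]].
by exists (fun i => g i x); split=> // i; exists i, x.
Qed.

Lemma cloneOf_range (K : (X -> Prop) -> Prop) (B : X -> Prop) (f : Op) :
  is_ideal K -> K B -> (forall x, B (projT2 f x)) -> cloneOf K f.
Proof. by move=> [Ksub _] KB hf A _; apply: Ksub KB _ => y [x [_ <-]]. Qed.

Definition lift_fun (z : 'I_2 -> X) : X :=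
  if (z ord_max).2 <= (z ord0).2 then ((z ord_max).1, (z ord0).2) else (0, 0).
Definition lift_op : Op := existT _ 1 lift_fun.

(** Points of [lift_op]'s image on line [m] come from lines [<= m] (or are 0). *)
Lemma lift_op_J : cloneOf idealJ lift_op.
Proof.
move=> A HA m.
have below := finite_bigU (finite_mem (iota 0 m.+1)) (fun d _ => HA d).
apply: finite_sub (finiteU below (finite_mem [:: 0])) => a [z [Az]].
rewrite /= /lift_fun; case: ifP => [le_z [<- e_m]|_ [<- _]]; last by right.
have low : (z ord_max).2 \in iota 0 m.+1 by rewrite mem_iota add0n ltnS -e_m.
left; exists (z ord_max).2; first exact: low.
by case: (z ord_max) (Az ord_max).
Qed.

(** The diagonal has width 1, but [lift_op] maps it onto a set containing
    [{0, ..., t} x {t}] for every [t]. *)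
Lemma lift_op_notI : ~ cloneOf idealI lift_op.
Proof.
have diagI : idealI (fun y : X => y.1 = y.2).
  by apply/idealI_bounded; exists 1 => n; apply: bounded_sub (bounded1 n) => a.
move=> /(_ _ diagI) [t /(_ t (List.seq 0 t.+1) (seq_NoDup _ _))].
rewrite length_seq => long_line; suff: (t.+1 <= t)%coq_nat by lia.
apply: long_line => a /in_seq [_ ha].
exists (fun i : 'I_2 => if i == ord0 then (t, t) else (a, a)); split.
  by case=> [[|[|]]].
by rewrite /= /lift_fun /=; case: leqP => //; lia.
Qed.

Definition ptuple (n : nat) := 'I_n.+1 -> option X.

Definition extends n (p : ptuple n) (x : 'I_n.+1 -> X) : Prop :=
  forall i y, p i = Some y -> x i = y.

Definition avoids n (p : ptuple n) (x : 'I_n.+1 -> X) (F : seq nat) : Prop :=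
  forall i, p i = None -> (x i).2 \notin F.

Definition maps_I_to_J n (g : ('I_n.+1 -> X) -> X) : Prop :=
  forall A, idealI A -> idealJ (image_pow (existT _ n g) A).

Section LocalFiniteness.
Variables (n : nat) (g : ('I_n.+1 -> X) -> X).
Hypothesis g_IJ : maps_I_to_J g.

(** Assuming the local finiteness fails for the line [m] and the partial
    tuple [p], we build tuples [xs 0, xs 1, ...] extending [p] whose free
    coordinates lie on pairwise distinct new lines and whose images are
    distinct points of line [m]; all their coordinates form a set of finite
    width whose image meets line [m] infinitely. *)
Section Escape.
Variables (m : nat) (p : ptuple n).
Hypothesis escape : forall (F : seq nat) (V : seq X),
  exists x, [/\ extends p x, (g x).2 = m, avoids p x F & g x \notin V].

Let pick (FV : seq nat * seq X) : 'I_n.+1 -> X :=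
  epsilon (inhabits (fun _ => (0, 0))) (fun x =>
    [/\ extends p x, (g x).2 = m, avoids p x FV.1 & g x \notin FV.2]).

Let pickP FV :
  [/\ extends p (pick FV), (g (pick FV)).2 = m, avoids p (pick FV) FV.1
    & g (pick FV) \notin FV.2].
Proof. exact: epsilon_spec (escape FV.1 FV.2). Qed.

Let lines (x : 'I_n.+1 -> X) : seq nat := [seq (x i).2 | i <- enum 'I_n.+1].

Fixpoint history (j : nat) : seq nat * seq X :=
  if j is j'.+1 then
    let x := pick (history j') in ((history j').1 ++ lines x, g x :: (history j').2)
  else ([::], [::]).

Let xs (j : nat) := pick (history j).

Let history_mono j d :
  {subset (history j).1 <= (history (j + d)).1} /\
  {subset (history j).2 <= (history (j + d)).2}.
Proof.
elim: d => [|d [IH1 IH2]]; first by rewrite addn0; split.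
rewrite addnS /=; split=> y hy; first by rewrite mem_cat IH1.
by rewrite in_cons IH2 ?orbT.
Qed.

Let used_later j j' : j < j' ->
  g (xs j) \in (history j').2 /\ forall i, (xs j i).2 \in (history j').1.
Proof.
move=> lt_jj'; rewrite -(subnKC lt_jj'); have [sub1 sub2] := history_mono j.+1 (j' - j.+1).
split; first by apply: sub2; rewrite /= in_cons eqxx.
move=> i; apply: sub1; rewrite /= mem_cat; apply/orP; right.
by apply: (map_f (fun i => (xs j i).2)); rewrite mem_enum.
Qed.

Let free_line_unique j j' i i' :
  p i = None -> p i' = None -> (xs j i).2 = (xs j' i').2 -> j = j'.
Proof.
wlog lt_jj' : j j' i i' / j < j' => [hwlog|free_i free_i' e].
  move=> free_i free_i' e; case: (ltngtP j j') => // lt.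
    exact: hwlog free_i free_i' e.
  by symmetry; exact: hwlog free_i' free_i (esym e).
have [_ /(_ i)] := used_later lt_jj'; rewrite e.
by have [_ _ /(_ i' free_i') /negP] := pickP (history j').
Qed.

Let support (y : X) : Prop := (exists i, p i = Some y) \/ exists j i, xs j i = y.

Let support_line l : exists j0, forall a, support (a, l) ->
  (exists i, odflt (0, 0) (p i) = (a, l)) \/ exists i, xs j0 i = (a, l).
Proof.
have fixed j i y : p i = Some y -> odflt (0, 0) (p i) = xs j i.
  by move=> pi; have [ext _ _ _] := pickP (history j); rewrite pi; symmetry; exact: ext pi.
case: (classic (exists j0 i0, p i0 = None /\ (xs j0 i0).2 = l)).
  move=> [j0 [i0 [free0 line0]]]; exists j0 => a [[i pi]|[j [i xji]]].
    by left; exists i; rewrite pi.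
  case pi: (p i) => [y|]; first by left; exists i; rewrite (fixed j i y) ?xji.
  by right; exists i; rewrite (@free_line_unique j0 j i0 i) // line0 xji.
move=> none; exists 0 => a [[i pi]|[j [i xji]]]; first by left; exists i; rewrite pi.
case pi: (p i) => [y|]; first by left; exists i; rewrite (fixed j i y) ?xji.
by exfalso; apply: none; exists j, i; rewrite xji.
Qed.

Let support_I : idealI support.
Proof.
apply/idealI_bounded; exists (n.+1 + n.+1) => l.
have [j0 hj0] := support_line l.
have := boundedU (bounded_coords (fun i => odflt (0, 0) (p i)) l) (bounded_coords (xs j0) l).
by apply: bounded_sub => a /hj0.
Qed.

(** The support has finite width, but its image meets line [m] in the
    infinitely many distinct points [g (xs j)]. *)
Lemma escape_absurd : False.
Proof.
have [l cover] := g_IJ support_I m.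
pose a j := (g (xs j)).1.
have on_m j : g (xs j) = (a j, m).
  by have [_ gm _ _] := pickP (history j); rewrite /a -gm -surjective_pairing.
have a_fresh j j' : j < j' -> a j != a j'.
  move=> lt; have [used _] := used_later lt; have [_ _ _] := pickP (history j').
  by apply: contra => /eqP e; rewrite -/(xs j') on_m -e -on_m.
have a_inj : injective a.
  by move=> j j' e; case: (ltngtP j j') => // lt; move: (a_fresh _ _ lt); rewrite e eqxx.
have nd : NoDup (map a (iota 0 (length l).+1)).
  by apply/uniq_NoDup; rewrite (map_inj_uniq a_inj) iota_uniq.
have covered y : In y (map a (iota 0 (length l).+1)) ->
    image_pow (existT _ n g) support (y, m).
  move=> /In_mem /mapP [j _ ->].
  by exists (xs j); split=> [i|]; [right; exists j, i | exact: on_m].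
have := (bounded_nodupP _ (length l)).1 (ex_intro _ l (conj (leqnn _) cover)) _ nd covered.
by rewrite -(size_length (map a _)) size_map size_iota; lia.
Qed.
End Escape.

Lemma local_finiteness m p : exists FV : seq nat * seq X, forall x,
  extends p x -> (g x).2 = m -> avoids p x FV.1 -> g x \in FV.2.
Proof.
apply: NNPP => none; apply: (@escape_absurd m p) => F V.
apply: NNPP => no_x; apply: none; exists (F, V) => x ext gm av.
by apply/negPn/negP => gV; apply: no_x; exists x.
Qed.

End LocalFiniteness.

Lemma local_finiteness_fun n (g : ('I_n.+1 -> X) -> X) : maps_I_to_J g ->
  exists (F : nat -> ptuple n -> seq nat) (V : nat -> ptuple n -> seq X),
    forall m p x, extends p x -> (g x).2 = m -> avoids p x (F m p) -> g x \in V m p.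
Proof.
move=> g_IJ; have [FV FVP] := choice _ (fun mp => local_finiteness g_IJ mp.1 mp.2).
by exists (fun m p => (FV (m, p)).1), (fun m p => (FV (m, p)).2) => m p; exact: FVP (m, p).
Qed.

(** Given local finiteness data [F], [V] for [g], the image [g x] on line [m]
    is located by refining the empty partial tuple along [x]: while some free
    coordinate of [x] lies on a line of [F m p], fix the first such one.  After
    [n.+1] steps this stops, and [g x] lies in [V m p] for the final [p]. *)
Section Refinement.
Variables (n : nat) (g : ('I_n.+1 -> X) -> X).
Variables (F : nat -> ptuple n -> seq nat) (V : nat -> ptuple n -> seq X).
Hypothesis FV_spec : forall m p x,
  extends p x -> (g x).2 = m -> avoids p x (F m p) -> g x \in V m p.

Definition next_fix m (p : ptuple n) (x : 'I_n.+1 -> X) : option ('I_n.+1 * nat) :=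
  if [pick i | (p i == None) && ((x i).2 \in F m p)] is Some i
  then Some (i, (x i).2) else None.

Definition fix_choices m (p : ptuple n) : seq (option ('I_n.+1 * nat)) :=
  None :: [seq Some (i, l) | i <- enum 'I_n.+1, l <- F m p].

Definition fix_coord (p : ptuple n) (i : 'I_n.+1) (y : X) : ptuple n :=
  fun j => if j == i then Some y else p j.

Definition apply_step (p : ptuple n) (o : option ('I_n.+1 * nat)) (oy : option X) :=
  if (o, oy) is (Some (i, _), Some y) then fix_coord p i y else p.

Definition chosen_value (o : option ('I_n.+1 * nat)) (x : 'I_n.+1 -> X) :=
  if o is Some (i, _) then Some (x i) else None.

Definition trace m j (x : 'I_n.+1 -> X) : ptuple n :=
  iter j (fun p => apply_step p (next_fix m p x) (chosen_value (next_fix m p x) x))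
    (fun _ => None).

Lemma next_fix_Some m p x i l : next_fix m p x = Some (i, l) ->
  [/\ p i = None, l = (x i).2 & l \in F m p].
Proof. by rewrite /next_fix; case: pickP => // i' /andP [/eqP ? ?] [<- <-]. Qed.

Lemma next_fix_None m p x : next_fix m p x = None -> avoids p x (F m p).
Proof.
rewrite /next_fix; case: pickP => // none _ i pi.
by move: (none i); rewrite pi eqxx /= => ->.
Qed.

Lemma next_fix_in m p x : next_fix m p x \in fix_choices m p.
Proof.
case e: (next_fix m p x) => [[i l]|]; last exact: mem_head.
have [_ _ lF] := next_fix_Some e; rewrite in_cons; apply/orP; right.
by apply: (allpairs_f (fun i l => Some (i, l))); rewrite ?mem_enum.
Qed.

Lemma trace_extends m j x : extends (trace m j x) x.
Proof.
elim: j => [|j IH] //= i y; rewrite {1}/apply_step.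
case e: (next_fix m (trace m j x) x) => [[i' l]|] /=; last exact: IH.
by rewrite /fix_coord; case: eqP => [-> [<-]|_]; last exact: IH.
Qed.

Definition nfixed (p : ptuple n) : nat := #|[pred i | p i != None]|.

Lemma nfixed_fix_coord p i y : p i = None -> nfixed (fix_coord p i y) = (nfixed p).+1.
Proof.
move=> pi; rewrite /nfixed (cardD1 i) inE /fix_coord eqxx add1n; congr _.+1.
by apply: eq_card => j; rewrite !inE; case: eqP => [->|]; rewrite ?pi.
Qed.

Lemma nfixed_free p i : p i = None -> nfixed p < n.+1.
Proof.
move=> pi; rewrite -[n.+1]card_ord; apply: proper_card; apply/properP; split.
  exact: subset_predT.
by exists i; rewrite // inE pi.
Qed.

(** Each effective step fixes one more coordinate. *)
Lemma trace_progress m j x :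
  next_fix m (trace m j x) x = None \/ j <= nfixed (trace m j x).
Proof.
elim: j => [|j IH]; first by right.
have -> : trace m j.+1 x = apply_step (trace m j x) (next_fix m (trace m j x) x)
                             (chosen_value (next_fix m (trace m j x) x) x) by [].
case e: (next_fix m (trace m j x) x) => [[i l]|]; last by left; rewrite /= e.
have [free _ _] := next_fix_Some e; rewrite /= nfixed_fix_coord //.
by case: IH; rewrite ?e // => lejp; right.
Qed.

Lemma trace_final m x : (g x).2 = m -> g x \in V m (trace m n.+1 x).
Proof.
move=> gm; apply: FV_spec gm _; first exact: trace_extends.
apply: next_fix_None.
case: (trace_progress m n.+1 x) => // full.
case e: (next_fix m (trace m n.+1 x) x) => [[i l]|] //.
have [free _ _] := next_fix_Some e.
by have := nfixed_free free; rewrite ltnNge full.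
Qed.

Definition step_line (o : option ('I_n.+1 * nat)) : nat :=
  if o is Some (_, l) then l else 0.

Definition step_values (A : X -> Prop) (o : option ('I_n.+1 * nat)) (oy : option X) :=
  oy = None \/ exists2 y, oy = Some y & A y /\ y.2 = step_line o.

Lemma chosen_value_step A m p x : (forall i, A (x i)) ->
  step_values A (next_fix m p x) (chosen_value (next_fix m p x) x).
Proof.
case e: (next_fix m p x) => [[i l]|] Ax; last by left.
by right; exists (x i); split=> //; have [_ -> _] := next_fix_Some e.
Qed.

Lemma step_values_bounded A t o :
  (forall l, bounded (on_line A l) t) -> bounded (step_values A o) (1 + t).
Proof.
move=> At; apply: boundedU (bounded1 None) _.
apply: (bounded_image (f := fun a => Some (a, step_line o)) _ (At (step_line o))).
move=> _ [y -> [Ay <-]].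
by exists y.1; rewrite /on_line -surjective_pairing.
Qed.

Lemma step_values_finite A o : idealJ A -> finite (step_values A o).
Proof.
move=> HA; apply: finiteU (finite1 None) _.
apply: (finite_image (f := fun a => Some (a, step_line o)) _ (HA (step_line o))).
move=> _ [y -> [Ay <-]].
by exists y.1; rewrite -surjective_pairing.
Qed.

Definition traces (A : X -> Prop) m j (p : ptuple n) : Prop :=
  exists2 x, (forall i, A (x i)) & trace m j x = p.

Lemma traces_finite A m j : idealJ A -> finite (traces A m j).
Proof.
move=> HA; elim: j => [|j IH].
  by apply: finite_sub (finite1 (fun _ => None)) => _ [x _ <-].
have step p := finite_bigU (finite_mem (fix_choices m p)) (fun o _ =>
  finite_bigU (step_values_finite o HA) (fun oy _ => finite1 (apply_step p o oy))).
apply: finite_sub (finite_bigU IH (fun p _ => step p)) => _ [x Ax <-].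
exists (trace m j x); first by exists x.
exists (next_fix m (trace m j x) x); first exact: next_fix_in.
by exists (chosen_value (next_fix m (trace m j x) x) x); first exact: chosen_value_step.
Qed.

Lemma maps_J_to_J A : idealJ A -> idealJ (image_pow (existT _ n g) A).
Proof.
move=> HA m.
have on_m p : finite (fun a => (a, m) \in V m p).
  by apply: (finite_image (f := fst) _ (finite_mem (V m p))) => a ?; exists (a, m).
apply: finite_sub (finite_bigU (traces_finite m n.+1 HA) (fun p _ => on_m p)).
move=> a [x [Ax gx]]; exists (trace m n.+1 x); first by exists x.
by move: gx => /= gx; rewrite -gx; apply: trace_final; rewrite gx.
Qed.

End Refinement.

Lemma cloneOf_I_J f : cloneOf idealI f -> cloneOf idealJ f.
Proof.
case: f => n g Hg.
have g_IJ : maps_I_to_J g by move=> A /Hg; exact: idealI_J.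
have [F [V FV_spec]] := local_finiteness_fun g_IJ.
exact: maps_J_to_J FV_spec.
Qed.

(** A set [B] of infinite width can store any finite amount of information
    in a single point: for every [N] some line of [B] carries [N] distinct
    points [code N 0, ..., code N N.-1]. *)
Section Coding.
Variable B : X -> Prop.
Hypothesis B_wide : ~ idealI B.

Lemma wide_line N : exists ls : nat * seq nat,
  [/\ uniq ls.2, N < size ls.2 & forall a, a \in ls.2 -> B (a, ls.1)].
Proof.
apply: NNPP => none; apply: B_wide; exists N => l s nd sB.
apply: NNPP => long; apply: none; exists (l, s); split=> /=.
- exact/uniq_NoDup.
- by rewrite size_length; lia.
- by move=> a /In_mem /sB.
Qed.

Definition code_data (N : nat) : nat * seq nat :=
  epsilon (inhabits (0, [::])) (fun ls =>
    [/\ uniq ls.2, N < size ls.2 & forall a, a \in ls.2 -> B (a, ls.1)]).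

Lemma code_dataP N : [/\ uniq (code_data N).2, N < size (code_data N).2
  & forall a, a \in (code_data N).2 -> B (a, (code_data N).1)].
Proof. exact: epsilon_spec (wide_line N). Qed.

Definition code (N e : nat) : X := (nth 0 (code_data N).2 e, (code_data N).1).

Definition decode (N a : nat) : nat := index a (code_data N).2.

Lemma code_in_B N e : e < N -> B (code N e).
Proof.
move=> lt_e; have [_ lt_N inB] := code_dataP N.
by apply: inB; apply: mem_nth; exact: ltn_trans lt_e lt_N.
Qed.

Lemma decode_code N e : e < N -> decode N (code N e).1 = e.
Proof.
by move=> lt_e; have [uq lt_N _] := code_dataP N; exact: index_uniq (ltn_trans lt_e lt_N) uq.
Qed.

(** Given local finiteness data [F], [V] for [g], the value [g x] is
    recovered from [x] together with the codes of the [n.+1] refinement steps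
    of [x] and of the position of [g x] in the final candidate list. *)
Section Decomposition.
Variables (n : nat) (g : ('I_n.+1 -> X) -> X).
Variables (F : nat -> ptuple n -> seq nat) (V : nat -> ptuple n -> seq X).
Hypothesis FV_spec : forall m p x,
  extends p x -> (g x).2 = m -> avoids p x (F m p) -> g x \in V m p.

Definition step_code m j (x : 'I_n.+1 -> X) : X :=
  let p := trace F m j x in
  code (size (fix_choices F m p)) (index (next_fix F m p x) (fix_choices F m p)).

Definition value_code m (x : 'I_n.+1 -> X) : X :=
  let p := trace F m n.+1 x in code (size (V m p)) (index (g x) (V m p)).

Lemma step_code_in_B m j x : B (step_code m j x).
Proof. by apply: code_in_B; rewrite index_mem; exact: next_fix_in. Qed.

Lemma value_code_in_B x : B (value_code (g x).2 x).
Proof. by apply: code_in_B; rewrite index_mem; exact: trace_final. Qed.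

Section Counting.
Variables (A : X -> Prop) (t : nat).
Hypothesis A_width : forall l, bounded (on_line A l) t.

(** The partial tuples reached after [j] steps by tuples from [A] whose
    first [j] step codes lie in [A]: each step is then decoded from one of
    at most [t] points of [A]. *)
Definition coded_traces m j (p : ptuple n) : Prop :=
  exists2 x, (forall i, A (x i)) /\ (forall k, k < j -> A (step_code m k x))
           & trace F m j x = p.

Lemma coded_traces_bounded m j : bounded (coded_traces m j) ((t * (1 + t)) ^ j).
Proof.
elim: j => [|j IH]; first by apply: bounded_sub (bounded1 (fun _ => None)) => _ [x _ <-].
pose N p := size (fix_choices F m p).
pose decoded p o := exists2 a, on_line A (code_data (N p)).1 a &
  o = nth None (fix_choices F m p) (decode (N p) a).
have decoded_bounded p : bounded (decoded p) t := bounded_image (fun o h => h) (A_width _).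
have step p := bounded_bigU (decoded_bounded p) (fun o _ =>
  bounded_bigU (step_values_bounded o A_width) (fun oy _ => bounded1 (apply_step p o oy))).
have := bounded_bigU IH (fun p _ => step p); rewrite muln1 -expnSr.
apply: bounded_sub => _ [x [Ax codesA] <-]; set p := trace F m j x.
exists p; first by exists x => //; split=> // k lt_kj; apply: codesA; exact: ltnW.
exists (next_fix F m p x).
  exists (step_code m j x).1; first exact: codesA.
  by rewrite decode_code ?nth_index ?index_mem //; exact: next_fix_in.
by exists (chosen_value (next_fix F m p x) x); first exact: chosen_value_step.
Qed.

Lemma coded_values_bounded m : bounded (fun a => exists2 x,
    [/\ forall i, A (x i), forall k, k < n.+1 -> A (step_code m k x) & A (value_code m x)]
    & g x = (a, m))
  ((t * (1 + t)) ^ n.+1 * t).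
Proof.
pose N p := size (V m p).
pose decoded p a := exists2 b, on_line A (code_data (N p)).1 b &
  a = (nth (0, 0) (V m p) (decode (N p) b)).1.
have := bounded_bigU (coded_traces_bounded m n.+1) (fun p _ =>
  bounded_image (fun a h => h) (A_width _) : bounded (decoded p) t).
apply: bounded_sub => a [x [Ax codesA valA] gx]; set p := trace F m n.+1 x.
exists p; first by exists x.
have gV : g x \in V m p by apply: (trace_final FV_spec); rewrite gx.
exists (value_code m x).1; first exact: valA.
by rewrite decode_code ?nth_index ?index_mem // gx.
Qed.

End Counting.

(** The arguments of [guarded] are indexed by ['I_nw.+1]: the [n.+1]
    coordinates of [x], then [n.+1] step codes, then one value code. *)
Definition nw := n.+1 + n.+1.

Definition xpart (z : 'I_nw.+1 -> X) : 'I_n.+1 -> X := fun i => z (inord i).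

Definition codes_match (z : 'I_nw.+1 -> X) : bool :=
  let x := xpart z in
  [forall k : 'I_n.+1, z (inord (n.+1 + k)) == step_code (g x).2 k x] &&
  (z (inord nw) == value_code (g x).2 x).

Definition guarded (z : 'I_nw.+1 -> X) : X :=
  if codes_match z then g (xpart z) else z ord0.

(** [guarded] preserves [idealI]: on each line its image is bounded by
    [coded_values_bounded]. *)
Lemma guarded_I : cloneOf idealI (existT _ nw guarded).
Proof.
move=> A /idealI_bounded [t A_width]; apply/idealI_bounded.
exists (t + (t * (1 + t)) ^ n.+1 * t) => l.
apply: bounded_sub (boundedU (A_width l) (coded_values_bounded A_width l)).
move=> a [z [Az]]; rewrite /= /guarded.
case: ifP => [/andP [/forallP stepsA /eqP valA]|_] za.
  have gl : (g (xpart z)).2 = l by rewrite za.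
  right; exists (xpart z) => //; split=> [i|k lt_k|]; first exact: Az.
    by have /eqP := stepsA (Ordinal lt_k); rewrite gl => <-.
  by rewrite -gl -valA.
by left; rewrite /on_line -za.
Qed.

Definition guarded_args (i : 'I_nw.+1) (y : 'I_n.+1 -> X) : X :=
  if i < n.+1 then y (inord i)
  else if i < nw then step_code (g y).2 (i - n.+1) y else value_code (g y).2 y.

Lemma guarded_comp : comp_op guarded guarded_args = existT _ n g.
Proof.
rewrite /comp_op; congr existT; apply: functional_extensionality => y.
have le_n_nw : n.+1 <= nw by rewrite leq_addr.
have x_args : xpart (guarded_args ^~ y) = y.
  apply: functional_extensionality => i; rewrite /xpart /guarded_args.
  by rewrite inordK ?ltn_ord ?inord_val //; apply: leq_trans (ltn_ord i) (leqW le_n_nw).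
rewrite /guarded /codes_match x_args.
have -> : [forall k : 'I_n.+1, guarded_args (inord (n.+1 + k)) y == step_code (g y).2 k y].
  apply/forallP => k; rewrite /guarded_args inordK; last by rewrite ltnS leq_add2l ltnW.
  by rewrite ltnNge leq_addr /= ltn_add2l ltn_ord addKn.
by rewrite /guarded_args inordK // ltnn ltnNge le_n_nw /= eqxx.
Qed.

End Decomposition.
End Coding.

(** If a clone [D] containing [cloneOf idealI] contains [f], then it contains
    every operation [h] whose values lie in [f[A0^k]] for some [A0] in
    [idealI]: [h] factors through [f] via operations with values in [A0]. *)
Lemma image_valued_in_clone (D : Op -> Prop) (f : Op) (A0 : X -> Prop)
    (r : nat) (h : ('I_r.+1 -> X) -> X) :
  is_clone D -> (forall f, cloneOf idealI f -> D f) -> D f -> idealI A0 ->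
  (forall y, image_pow f A0 (h y)) -> D (existT _ r h).
Proof.
case: f => k f [_ D_comp] CI_D Df A0_I h_f.
have [pre preP] := choice _ h_f.
have -> : existT _ r h = comp_op f (fun i y => pre y i).
  rewrite /comp_op; congr existT; apply: functional_extensionality => y.
  by have [_ /= ->] := preP y.
apply: D_comp Df _ => i; apply: CI_D; apply: (cloneOf_range is_ideal_I A0_I) => y.
by have [pre_A0 _] := preP y; exact: pre_A0.
Qed.

(** Such an [f] maps some [A0] of finite
    width onto a set of infinite width, which serves to code the refinement
    steps of any [g] in [cloneOf idealJ]. *)
Lemma clone_above_I (D : Op -> Prop) (f : Op) :
  is_clone D -> (forall f, cloneOf idealI f -> D f) -> D f -> ~ cloneOf idealI f ->
  forall g, cloneOf idealJ g -> D g.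
Proof.
move=> HD CI_D Df f_notI [n g] gJ.
have [A0 [A0_I B_wide]] : exists A0, idealI A0 /\ ~ idealI (image_pow f A0).
  apply: NNPP => none; apply: f_notI => A A_I.
  by apply: NNPP => nI; apply: none; exists A.
have g_IJ : maps_I_to_J g by move=> A /idealI_J; exact: gJ.
have [F [V FV_spec]] := local_finiteness_fun g_IJ.
have in_D r h : (forall y, image_pow f A0 (h y)) -> D (existT _ r h).
  exact: image_valued_in_clone HD CI_D Df A0_I.
rewrite -(guarded_comp (image_pow f A0) g F V); apply: (proj2 HD).
  exact/CI_D/guarded_I.
move=> i; rewrite /guarded_args; case: (i < n.+1); first exact: (proj1 HD n (inord i)).
by case: (i < nw n); apply: in_D => y; [exact: step_code_in_B | exact: value_code_in_B].
Qed.

Theorem mainTheorem1 :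
  is_clone (cloneOf idealI) /\ is_clone (cloneOf idealJ) /\
  (forall f, cloneOf idealI f -> cloneOf idealJ f) /\
  (exists f, cloneOf idealJ f /\ ~ cloneOf idealI f) /\
  (forall D : Op -> Prop, is_clone D ->
     (forall f, cloneOf idealI f -> D f) ->
     (forall f, D f -> cloneOf idealJ f) ->
     (forall f, D f <-> cloneOf idealI f) \/
     (forall f, D f <-> cloneOf idealJ f)).
Proof.
split; first exact: cloneOf_is_clone is_ideal_I.
split; first exact: cloneOf_is_clone is_ideal_J.
split; first exact: cloneOf_I_J.
split; first by exists lift_op; split; [exact: lift_op_J | exact: lift_op_notI].
move=> D HD CI_D D_CJ.
case: (classic (forall f, D f -> cloneOf idealI f)) => [D_CI|D_notCI].
  by left => f; split; [exact: D_CI | exact: CI_D].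
right => f; split; first exact: D_CJ.
have [f0 Df0 f0_notI] : exists2 f0, D f0 & ~ cloneOf idealI f0.
  apply: NNPP => none; apply: D_notCI => f0 Df0.
  by apply: NNPP => nI; apply: none; exists f0.
exact: clone_above_I HD CI_D Df0 f0_notI f.
Qed.
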